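(* Let $\mu$ be a probability measure on $[0,\infty)$ with $\mu(\{0\})<1$, and let $p\in\mathbb N$. Then $m_p(\mu)=\int_{[0,\infty)}x^p\,\mu(dx)<\infty$ if and only if there exist real numbers $r_1,\dots,r_p$ such that $$\frac1x K_\mu(-x)=-r_1+r_2x+\dots+(-1)^p r_p x^{p-1}+o(x^{p-1})\quad\text{as } x\downarrow 0,\ x>0.$$
   Context: For a probability measure $\mu$ on $[0,\infty)$ with $\mu(\{0\})<1$, define $\psi_\mu(z)=\int_{[0,\infty)}\frac{z\xi}{1-z\xi}\,\mu(d\xi)$ for $z\in\mathbb C\setminus[0,\infty)$, and $K_\mu(z)=\psi_\mu(z)/(1+\psi_\mu(z))$. *)

From HB Require Import structures.
From mathcomp Require Import all_boot all_order all_algebra.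
From mathcomp Require Import all_classical all_reals all_analysis.
Set Implicit Arguments. Unset Strict Implicit. Unset Printing Implicit Defensive.
Import Order.TTheory GRing.Theory Num.Theory.
Import numFieldNormedType.Exports.
Local Open Scope classical_set_scope.
Local Open Scope ring_scope.

(* psi_mu(z) = \int_{[0,oo)} z xi / (1 - z xi) mu(dxi), restricted to real
   arguments z (only z = -x, x > 0, is used in the statement). *)
Definition psi (R : realType) (mu : probability R R) (z : R) : R :=
  Rintegral mu `[0%R, +oo[%classic (fun xi => z * xi / (1 - z * xi)).

Definition Kmu (R : realType) (mu : probability R R) (z : R) : R :=
  psi mu z / (1 + psi mu z).

Definition moment (R : realType) (mu : probability R R) (p : nat) : \bar R :=
  (\int[mu]_(x in `[0%R, +oo[%classic) (x ^+ p)%:E)%E.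

From HB Require Import structures.
From mathcomp Require Import all_boot all_order all_algebra.
From mathcomp Require Import all_classical all_reals all_analysis.
From mathcomp Require Import measurable_realfun ring lra.
Import Order.TTheory GRing.Theory Num.Theory.
Import numFieldNormedType.Exports.
Local Open Scope classical_set_scope.
Local Open Scope ring_scope.

(* For [x > 0] put [G_k(x) = \int xi^k / (1 + x xi) dmu] ([damped_momentr k x]).
   Monotone convergence gives [G_k(x) -> m_k] as [x] decreases to [0], and whenever
   [m_k < +oo] one has [G_k(x) = m_k - x G_(k+1)(x)].  Inducting with this identity,
   [m_(k+n) < +oo] iff [G_k] has a polynomial expansion up to [o(x^n)] at [0+].
   Moreover [psi(-x) = - x G_1(x)] and [1 + psi(-x) = G_0(x) = 1 - x G_1(x)], so
   [F(x) = x^-1 K(-x) = - G_1 / G_0] satisfies [F + G_1 = x F G_1].  Unrolling this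
   symmetric relation, [F = - \sum_(j <= n) x^j G_1^(j+1) + x^(n+1) G_1^(n+1) F], so [F]
   and [G_1] admit expansions of the same orders: [m_(n+1) < +oo] iff [F] has an
   expansion up to [o(x^n)], which is the claim for [p = n + 1].  For [p = 0] the
   claim reduces to [K(-x) = (G_0 - 1) / G_0 -> 0]. *)

Lemma cvg_near_eq {T : Type} {U : topologicalType} {F : set_system T}
    {FF : Filter F} {f g : T -> U} {l : U} :
  f @ F --> l -> {near F, f =1 g} -> g @ F --> l.
Proof.
move=> hf fg; apply: cvg_trans hf; apply: near_eq_cvg.
by near=> x; rewrite (near fg x).
Unshelve. all: by end_near.
Qed.

Lemma fixpoint_unroll {R : comRingType} (a b x : R) m : a + b = x * a * b ->
  a = - \sum_(j < m) x ^+ j * b ^+ j.+1 + x ^+ m * b ^+ m * a.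
Proof.
move=> ab; elim: m => [|m IH]; first by rewrite big_ord0 oppr0 add0r !expr0 !mul1r.
rewrite big_ord_recr /= {1}IH; apply/eqP; rewrite -subr_eq0; apply/eqP.
transitivity (x ^+ m * b ^+ m * (a + b - x * a * b)); first by rewrite !exprS; ring.
by rewrite ab subrr mulr0.
Qed.

Lemma horner_drop1 {R : comRingType} (P : {poly R}) x :
  P.[x] = P.[0] + x * (drop_poly 1 P).[x].
Proof.
rewrite -{1}(poly_take_drop 1 P) hornerD hornerM hornerXn expr1 /take_poly horner_poly.
by rewrite big_ord1 expr0 mulr1 horner_coef0 mulrC.
Qed.

Section PolynomialExpansionAt0.
Context {R : realType}.
Implicit Types (f g h : R -> R) (n : nat) (l : R).

Definition is_little_o n h := (fun x => h x / x ^+ n) @ (0 : R)^'+ --> (0 : R).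

Definition has_expansion n f :=
  exists P : {poly R}, is_little_o n (fun x => f x - P.[x]).

Lemma cvg_at0_id : x @[x --> (0 : R)^'+] --> (0 : R).
Proof. exact/cvg_at_right_filter/cvg_id. Qed.

Lemma cvg_at0_horner (P : {poly R}) : P.[x] @[x --> (0 : R)^'+] --> P.[0].
Proof. exact/cvg_at_right_filter/continuous_horner. Qed.

Lemma is_little_o_near_eq {n f g} : is_little_o n f ->
  {near (0 : R)^'+, f =1 g} -> is_little_o n g.
Proof.
by move=> hf fg; apply: cvg_near_eq hf _; near=> x; rewrite /= (near fg x).
Unshelve. all: by end_near.
Qed.

Lemma is_little_o0 f : is_little_o 0 f <-> f x @[x --> (0 : R)^'+] --> (0 : R).
Proof. by rewrite /is_little_o; under eq_fun do rewrite expr0 divr1. Qed.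

Lemma is_little_oD {n f g} : is_little_o n f -> is_little_o n g ->
  is_little_o n (fun x => f x + g x).
Proof.
move=> /cvgD/[apply]; rewrite addr0 => hfg; apply: cvg_near_eq hfg _.
by near=> x; rewrite /= mulrDl.
Unshelve. all: by end_near.
Qed.

Lemma is_little_oZ {n f} (c : R) : is_little_o n f -> is_little_o n (fun x => c * f x).
Proof.
move=> /(cvgM (cvg_cst c)); rewrite mulr0 => hcf; apply: cvg_near_eq hcf _.
by near=> x; rewrite /= mulrA.
Unshelve. all: by end_near.
Qed.

Lemma is_little_oM {n f g l} : is_little_o n f -> g x @[x --> (0 : R)^'+] --> l ->
  is_little_o n (fun x => f x * g x).
Proof.
move=> /cvgM/[apply]; rewrite mul0r => hfg; apply: cvg_near_eq hfg _.
by near=> x; rewrite /= mulrAC.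
Unshelve. all: by end_near.
Qed.

Lemma is_little_o_mulX {n h} :
  is_little_o n.+1 (fun x => x * h x) <-> is_little_o n h.
Proof.
have eq_quot : {near (0 : R)^'+, (fun x => x * h x / x ^+ n.+1) =1 (fun x => h x / x ^+ n)}.
  near=> x; have x0 : x != 0 by rewrite gt_eqF //; near: x; exact: nbhs_right_gt.
  by rewrite exprS invfM mulrACA mulfV // mul1r.
by split=> h0; apply: cvg_near_eq h0 _; near=> x; rewrite (near eq_quot x).
Unshelve. all: by end_near.
Qed.

Lemma is_little_o_mulXn n {f l} : f x @[x --> (0 : R)^'+] --> l ->
  is_little_o n (fun x => x ^+ n.+1 * f x).
Proof.
move=> /(cvgM cvg_at0_id); rewrite mul0r => /is_little_o0 hf.
elim: n => [|n IH]; first by refine (is_little_o_near_eq hf _); near=> x; rewrite expr1.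
refine (is_little_o_near_eq (is_little_o_mulX.2 IH) _).
by near=> x; rewrite /= [in RHS]exprS mulrA.
Unshelve. all: by end_near.
Qed.

Lemma is_little_oS {n f} : is_little_o n.+1 f -> is_little_o n f.
Proof.
move=> /is_little_oM/(_ cvg_at0_id) hf; apply/is_little_o_mulX.1.
by refine (is_little_o_near_eq hf _); near=> x; rewrite /= mulrC.
Unshelve. all: by end_near.
Qed.

Lemma is_little_o_cvg0 {n f} : is_little_o n f -> f x @[x --> (0 : R)^'+] --> (0 : R).
Proof. by elim: n => [|n IH]; [move/is_little_o0 | move/is_little_oS]. Qed.

Lemma is_little_o_horner_cvg {n f} {P : {poly R}} :
  is_little_o n (fun x => f x - P.[x]) -> f x @[x --> (0 : R)^'+] --> P.[0].
Proof.
move=> /is_little_o_cvg0 hf.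
pose proof (cvgD hf (cvg_at0_horner P)) as hfP; rewrite add0r in hfP.
by apply: cvg_near_eq hfP _; near=> x; rewrite /= subrK.
Unshelve. all: by end_near.
Qed.

Lemma has_expansion_cvg {n f} : has_expansion n f -> exists l, f x @[x --> (0 : R)^'+] --> l.
Proof. by case=> P /is_little_o_horner_cvg; exists P.[0]. Qed.

Lemma has_expansion_near_eq {n f g} : has_expansion n f ->
  {near (0 : R)^'+, f =1 g} -> has_expansion n g.
Proof.
case=> P hP fg; exists P; refine (is_little_o_near_eq hP _).
by near=> x; rewrite (near fg x).
Unshelve. all: by end_near.
Qed.

Lemma has_expansion_poly n (P : {poly R}) : has_expansion n (horner P).
Proof.
exists P; apply: cvg_near_eq (cvg_cst 0) _.
by near=> x; rewrite /= subrr mul0r.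
Unshelve. all: by end_near.
Qed.

Lemma has_expansionD {n f g} : has_expansion n f -> has_expansion n g ->
  has_expansion n (fun x => f x + g x).
Proof.
move=> [P hP] [Q hQ]; exists (P + Q); refine (is_little_o_near_eq (is_little_oD hP hQ) _).
by near=> x; rewrite /= hornerD; ring.
Unshelve. all: by end_near.
Qed.

Lemma has_expansionN {n f} : has_expansion n f -> has_expansion n (fun x => - f x).
Proof.
move=> [P hP]; exists (- P); refine (is_little_o_near_eq (is_little_oZ (-1) hP) _).
by near=> x; rewrite /= hornerN; ring.
Unshelve. all: by end_near.
Qed.

Lemma has_expansionM {n f g} : has_expansion n f -> has_expansion n g ->
  has_expansion n (fun x => f x * g x).
Proof.
move=> hf hg; have [lg cvg_g] := has_expansion_cvg hg.
case: hf hg => P hP [Q hQ]; exists (P * Q).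
have := is_little_oD (is_little_oM hP cvg_g) (is_little_oM hQ (cvg_at0_horner P)).
by move/is_little_o_near_eq; apply; near=> x; rewrite /= hornerM; ring.
Unshelve. all: by end_near.
Qed.

Lemma has_expansion_add_little_o {n f h} : has_expansion n f -> is_little_o n h ->
  has_expansion n (fun x => f x + h x).
Proof.
move=> [P hP] hh; exists P; refine (is_little_o_near_eq (is_little_oD hP hh) _).
by near=> x; rewrite /=; ring.
Unshelve. all: by end_near.
Qed.

Lemma cvg_at0_exprn {f l} k : f x @[x --> (0 : R)^'+] --> l ->
  f x ^+ k @[x --> (0 : R)^'+] --> l ^+ k.
Proof.
move=> hf; elim: k => [|k IH].
  by rewrite expr0; under eq_fun do rewrite expr0; exact: cvg_cst.
by rewrite exprS; under eq_fun do rewrite exprS; exact: cvgM.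
Qed.

Lemma has_expansion_exprn {n f} k : has_expansion n f -> has_expansion n (fun x => f x ^+ k).
Proof.
move=> hf; elim: k => [|k IH].
  by refine (has_expansion_near_eq (has_expansion_poly n 1) _); near=> x; rewrite hornerC expr0.
by refine (has_expansion_near_eq (has_expansionM hf IH) _); near=> x; rewrite exprS.
Unshelve. all: by end_near.
Qed.

Lemma has_expansion_sum n m (F : nat -> R -> R) : (forall j, has_expansion n (F j)) ->
  has_expansion n (fun x => \sum_(j < m) F j x).
Proof.
move=> hF; elim: m => [|m IH].
  by refine (has_expansion_near_eq (has_expansion_poly n 0) _); near=> x; rewrite big_ord0 horner0.
by refine (has_expansion_near_eq (has_expansionD IH (hF m)) _); near=> x; rewrite big_ord_recr.
Unshelve. all: by end_near.
Qed.

Lemma has_expansion_fixpoint {n a b} :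
  {near (0 : R)^'+, forall x, a x + b x = x * a x * b x} ->
  has_expansion n b -> has_expansion n a.
Proof.
move=> ab hb; have [lb cvg_b] := has_expansion_cvg hb.
have cvg_den : 1 - x * b x @[x --> (0 : R)^'+] --> (1 : R).
  pose proof (cvgB (cvg_cst (1 : R)) (cvgM cvg_at0_id cvg_b)) as h.
  by rewrite mul0r subr0 in h.
have cvg_a : a x @[x --> (0 : R)^'+] --> - lb.
  pose proof (cvgr_neq0 _ cvg_den (oner_neq0 R)) as den_neq0.
  pose proof (cvgM (cvgN cvg_b) (cvgV (oner_neq0 R) cvg_den)) as h.
  rewrite invr1 mulr1 in h; apply: cvg_near_eq h _; near=> x.
  have den0 : 1 - x * b x != 0 by exact: (near den_neq0 x).
  rewrite /= -[a x](mulfK den0); congr (_ / _).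
  by rewrite mulrBr mulr1 mulrCA mulrA -(near ab x) // opprD addNKr.
have hsum : has_expansion n (fun x => - \sum_(j < n.+1) x ^+ j * b x ^+ j.+1).
  apply: has_expansionN.
  apply: (has_expansion_sum n n.+1 (fun j x => x ^+ j * b x ^+ j.+1)) => j.
  apply: has_expansionM (has_expansion_exprn _ hb).
  by refine (has_expansion_near_eq (has_expansion_poly n 'X^j) _); near=> x; rewrite hornerXn.
pose proof (is_little_o_mulXn n (cvgM (cvg_at0_exprn n.+1 cvg_b) cvg_a)) as hrest.
refine (has_expansion_near_eq (has_expansion_add_little_o hsum hrest) _).
by near=> x; rewrite /= mulrA -fixpoint_unroll // (near ab x).
Unshelve. all: by end_near.
Qed.

Lemma has_expansion_alternating_sum n f : has_expansion n f <->
  exists r : nat -> R,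
    (fun x => (f x - \sum_(1 <= k < n.+2) (-1) ^+ k * r k * x ^+ k.-1)
       / x ^ (n.+1%:Z - 1)) @ 0%R^'+ --> 0%R.
Proof.
have -> : n.+1%:Z - 1 = n%:Z by rewrite intS addrC addKr.
have reindex (r : nat -> R) x : \sum_(1 <= k < n.+2) (-1) ^+ k * r k * x ^+ k.-1 =
    \sum_(i < n.+1) (-1) ^+ i.+1 * r i.+1 * x ^+ i.
  by rewrite big_add1 /= big_mkord.
split=> [[P hP]|[r hr]].
  exists (fun k => (-1) ^+ k * P`_k.-1).
  have := is_little_oD hP (is_little_o_mulXn n (cvg_at0_horner (drop_poly n.+1 P))).
  move/is_little_o_near_eq; apply; near=> x; rewrite reindex /=.
  rewrite -{1}(poly_take_drop n.+1 P) hornerD hornerM hornerXn /take_poly horner_poly.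
  under [X in _ = _ - X]eq_bigr do rewrite /= mulrA -exprMn mulrNN mulr1 expr1n mul1r.
  ring.
exists (\poly_(i < n.+1) ((-1) ^+ i.+1 * r i.+1)).
by apply: cvg_near_eq hr _; near=> x; rewrite /= reindex horner_poly.
Unshelve. all: by end_near.
Qed.

End PolynomialExpansionAt0.

Section DampedMoments.
Context {R : realType} (mu : probability R R).
Hypothesis mu_neg0 : mu `]-oo, 0%R[%classic = 0%E.
Implicit Types (k : nat) (x y xi : R).

Local Notation D := (`[0%R, +oo[%classic : set R).

(* Using [|xi|] rather than [xi] makes the integrand continuous on all of [R], hence
   measurable; the two agree on [D]. *)
Definition damped_integrand k x (xi : R) := xi ^+ k / (1 + x * `|xi|).

Definition damped_moment k x := (\int[mu]_(xi in D) (damped_integrand k x xi)%:E)%E.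

Definition damped_momentr k x := fine (damped_moment k x).

Let measurable_D : measurable D. Proof. exact: measurable_itv. Qed.

Let D_ge0 xi : D xi -> 0 <= xi.
Proof. by rewrite /= in_itv /= andbT. Qed.

Lemma damped_integrand_continuous k x : 0 <= x -> continuous (damped_integrand k x).
Proof.
move=> x0 xi; apply: cvgM; first exact: exprn_continuous.
apply: cvgV; first by rewrite gt_eqF // ltr_pwDl // mulr_ge0.
by apply: cvgD; [exact: cvg_cst | apply: cvgM; [exact: cvg_cst | exact: norm_continuous]].
Qed.

Lemma measurable_damped_integrand k x : 0 <= x ->
  measurable_fun D (EFin \o damped_integrand k x).
Proof.
move=> x0; apply/measurable_EFinP/measurable_funTS.
by apply: continuous_measurable_fun; exact: damped_integrand_continuous.
Qed.

Lemma damped_integrand_ge0 k x xi : 0 <= x -> D xi -> 0 <= damped_integrand k x xi.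
Proof.
by move=> x0 /D_ge0 xi0; rewrite divr_ge0 ?exprn_ge0 // addr_ge0 // mulr_ge0.
Qed.

Lemma damped_integrand_le k x y xi : 0 <= x -> x <= y -> D xi ->
  damped_integrand k y xi <= damped_integrand k x xi.
Proof.
move=> x0 xy /D_ge0 xi0; rewrite ler_wpM2l ?exprn_ge0 //.
rewrite lef_pV2 ?posrE ?ltr_pwDl ?mulr_ge0 //; last exact: le_trans xy.
by rewrite lerD2l ler_wpM2r.
Qed.

Lemma damped_moment_at0 k : damped_moment k 0 = moment mu k.
Proof. by apply: eq_integral => xi _; rewrite /damped_integrand mul0r addr0 divr1. Qed.

Lemma damped_moment_ge0 k {x} : 0 <= x -> (0 <= damped_moment k x)%E.
Proof.
by move=> x0; apply: integral_ge0 => xi Dxi; rewrite lee_fin damped_integrand_ge0.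
Qed.

Lemma damped_moment_le k {x y} : 0 <= x -> x <= y ->
  (damped_moment k y <= damped_moment k x)%E.
Proof.
move=> x0 xy; have y0 := le_trans x0 xy.
apply: ge0_le_integral => //.
- by move=> xi Dxi; rewrite lee_fin damped_integrand_ge0.
- exact: measurable_damped_integrand.
- exact: measurable_damped_integrand.
- by move=> xi Dxi; rewrite lee_fin damped_integrand_le.
Qed.

Lemma damped_moment_le_moment k {x} : 0 <= x -> (damped_moment k x <= moment mu k)%E.
Proof. by move=> x0; rewrite -damped_moment_at0 damped_moment_le. Qed.

Lemma moment_ge0 k : (0 <= moment mu k)%E.
Proof. by rewrite -damped_moment_at0 damped_moment_ge0. Qed.

Lemma moment0_halfline : moment mu 0 = mu D.
Proof.
rewrite /moment (eq_integral (cst 1%E)); last by move=> xi _; rewrite expr0.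
by rewrite integral_cst // mul1e.
Qed.

Lemma moment0_lty : (moment mu 0 < +oo)%E.
Proof. by rewrite moment0_halfline (le_lt_trans (probability_le1 mu _)) ?ltey. Qed.

Lemma moment0 : moment mu 0 = 1%E.
Proof.
rewrite moment0_halfline -setCitvl; have := probability_setC mu (measurable_itv `]-oo, 0%R[).
by rewrite mu_neg0 sube0.
Qed.

Lemma moment_damped_split k {x} : 0 <= x ->
  moment mu k = (damped_moment k x + x%:E * damped_moment k.+1 x)%E.
Proof.
move=> x0; rewrite -damped_moment_at0 /damped_moment.
rewrite -ge0_integralZl_EFin //; last 2 first.
- by move=> xi Dxi; rewrite lee_fin damped_integrand_ge0.
- exact: measurable_damped_integrand.
rewrite -ge0_integralD //; last 4 first.
- by move=> xi Dxi; rewrite lee_fin damped_integrand_ge0.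
- exact: measurable_damped_integrand.
- by move=> xi Dxi; rewrite -EFinM lee_fin mulr_ge0 // damped_integrand_ge0.
- apply/measurable_EFinP; apply: measurable_funM; first exact: measurable_cst.
  by apply/measurable_EFinP; exact: measurable_damped_integrand.
apply: eq_integral => xi /[!inE] /D_ge0 xi0.
rewrite -EFinM -EFinD /damped_integrand mul0r addr0 divr1 ger0_norm //; congr (_%:E).
have den0 : 1 + x * xi != 0 by rewrite gt_eqF // ltr_pwDl // mulr_ge0.
by rewrite exprS; field.
Qed.

Lemma damped_moment_succ_lty k {x} : (moment mu k < +oo)%E -> 0 < x ->
  (damped_moment k.+1 x < +oo)%E.
Proof.
move=> mk x0; have := moment_damped_split k (ltW x0).
have := damped_moment_ge0 k (ltW x0); have := damped_moment_ge0 k.+1 (ltW x0).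
case: (damped_moment k.+1 x) => [r| |] //= _ dk0 mkE; first by rewrite ltey.
move: mk; rewrite mkE [(x%:E * _)%E]muleC gt0_mulye ?lte_fin // addey ?ltxx //.
by rewrite gt_eqF // (lt_le_trans _ dk0) // ltNye.
Qed.

Lemma damped_momentE k {x} : 0 <= x -> (damped_moment k x < +oo)%E ->
  damped_moment k x = (damped_momentr k x)%:E.
Proof. by move=> x0 dk; rewrite fineK // ge0_fin_numE ?damped_moment_ge0. Qed.

Lemma damped_moment_lty k {x} : 0 <= x -> (moment mu k < +oo)%E ->
  (damped_moment k x < +oo)%E.
Proof. by move=> x0; apply: le_lt_trans (damped_moment_le_moment k x0). Qed.

Lemma damped_momentr_split k {x} : (moment mu k < +oo)%E -> 0 < x ->
  damped_momentr k x = fine (moment mu k) - x * damped_momentr k.+1 x.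
Proof.
move=> mk x0; have := moment_damped_split k (ltW x0).
rewrite damped_momentE ?damped_moment_lty ?ltW //.
rewrite (damped_momentE k.+1 (ltW x0) (damped_moment_succ_lty k mk x0)) -EFinM -EFinD /= => ->.
by rewrite addrK.
Qed.

Lemma moment_lty_le j q : (j <= q)%N -> (moment mu q < +oo)%E -> (moment mu j < +oo)%E.
Proof.
move=> jq mq; have mX n : measurable_fun D (fun xi => (xi ^+ n)%:E).
  by apply/measurable_EFinP; exact: exprn_measurable.
have X_ge0 n xi : D xi -> (0 <= (xi ^+ n)%:E)%E.
  by move=> /D_ge0 xi0; rewrite lee_fin exprn_ge0.
apply: (@le_lt_trans _ _ (moment mu 0 + moment mu q)%E); last first.
  by rewrite lte_add_pinfty // moment0_lty.
rewrite /moment -ge0_integralD //; last exact: X_ge0.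
apply: ge0_le_integral => //.
- exact: X_ge0.
- exact: emeasurable_funD.
- move=> xi /D_ge0 xi0; rewrite -EFinD lee_fin expr0.
  have [xi1|xi1] := leP xi 1.
    by rewrite (le_trans (exprn_ile1 _ xi0 xi1)) // lerDl exprn_ge0.
  rewrite addrC -[xi ^+ j]addr0 lerD // -(subnKC jq) exprD ler_peMr ?exprn_ge0 //.
  by rewrite exprn_ege1 // ltW.
Qed.

Let inv_succ n : R := n.+1%:R^-1.

Let inv_succ_gt0 n : 0 < inv_succ n.
Proof. by rewrite invr_gt0 ltr0Sn. Qed.

Let inv_succ_le n m : (n <= m)%N -> inv_succ m <= inv_succ n.
Proof. by move=> nm; rewrite lef_pV2 ?posrE ?ltr0Sn // ler_nat ltnS. Qed.

Let is_cvg_damped_moment_inv_succ k : cvgn (fun n => damped_moment k (inv_succ n)).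
Proof.
apply/cvg_ex; eexists; apply: ereal_nondecreasing_cvgn => n m nm.
by apply: damped_moment_le; [exact/ltW/inv_succ_gt0 | exact: inv_succ_le].
Qed.

Let moment_limn k : moment mu k = limn (fun n => damped_moment k (inv_succ n)).
Proof.
rewrite /damped_moment -(monotone_convergence mu measurable_D
  (g' := fun n xi => (damped_integrand k (inv_succ n) xi)%:E)).
- apply: eq_integral => xi _; apply/esym/cvg_lim => //.
  apply: cvg_EFin; first exact: nearW.
  have : (fun n => xi ^+ k * (1 + inv_succ n * `|xi|)^-1) @ \oo --> xi ^+ k * (1 + 0 * `|xi|)^-1.
    apply: cvgM; first exact: cvg_cst.
    apply: cvgV; first by rewrite mul0r addr0 oner_neq0.
    apply: cvgD; first exact: cvg_cst.
    by apply: cvgM; [exact: cvg_harmonic | exact: cvg_cst].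
  by rewrite mul0r addr0 invr1 mulr1.
- by move=> n; apply: measurable_damped_integrand; exact/ltW/inv_succ_gt0.
- by move=> n xi Dxi; rewrite lee_fin damped_integrand_ge0 // (ltW (inv_succ_gt0 n)).
- move=> xi Dxi n m nm; rewrite lee_fin damped_integrand_le //; last exact: inv_succ_le.
  exact/ltW/inv_succ_gt0.
Qed.

Lemma damped_momentr_cvg k : (moment mu k < +oo)%E ->
  damped_momentr k x @[x --> (0 : R)^'+] --> fine (moment mu k).
Proof.
move=> mk; set M := fine (moment mu k).
have mkE : moment mu k = M%:E by rewrite /M fineK // ge0_fin_numE ?moment_ge0.
apply/cvgrPdist_lt => e e0.
have [n lt_n] : exists n, ((M - e)%:E < damped_moment k (inv_succ n))%E.
  apply: contrapT => /forallNP le_Me.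
  suff : (moment mu k <= (M - e)%:E)%E by rewrite mkE lee_fin; lra.
  rewrite moment_limn; apply: lime_le; first exact: is_cvg_damped_moment_inv_succ.
  by apply: nearW => m; rewrite leNgt; apply/negP; exact: le_Me.
near=> x.
have x0 : 0 < x by near: x; exact: nbhs_right_gt.
have xn : x < inv_succ n by near: x; exact/nbhs_right_lt/inv_succ_gt0.
have := damped_moment_le k (ltW x0) (ltW xn).
have := damped_moment_le_moment k (ltW x0).
rewrite (damped_momentE k (ltW x0) (damped_moment_lty k (ltW x0) mk)) mkE !lee_fin.
move=> le_M le_dn.
have := lt_le_trans lt_n le_dn; rewrite lte_fin => lt_Me.
by rewrite ger0_norm; lra.
Unshelve. all: by end_near.
Qed.

Lemma moment_succ_lty_of_cvg k : (moment mu k < +oo)%E ->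
  (exists l : R, damped_momentr k.+1 x @[x --> (0 : R)^'+] --> l) ->
  (moment mu k.+1 < +oo)%E.
Proof.
move=> mk [l cvg_l]; suff bnd n : (damped_moment k.+1 (inv_succ n) <= (l + 1)%:E)%E.
  rewrite moment_limn; apply: (le_lt_trans (y := (l + 1)%:E)); last exact: ltey.
  apply: lime_le; first exact: is_cvg_damped_moment_inv_succ.
  by apply: nearW; exact: bnd.
near (0 : R)^'+ => y.
have y0 : 0 < y by near: y; exact: nbhs_right_gt.
have yn : y < inv_succ n by near: y; exact/nbhs_right_lt/inv_succ_gt0.
have dist_l : `|l - damped_momentr k.+1 y| < 1 by near: y; exact: cvgr_dist_lt cvg_l _ ltr01.
apply: (le_trans (damped_moment_le k.+1 (ltW y0) (ltW yn))).
rewrite (damped_momentE k.+1 (ltW y0) (damped_moment_succ_lty k mk y0)) lee_fin.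
by move: dist_l; rewrite ltr_distlC => /andP[_]; lra.
Unshelve. all: by end_near.
Qed.

Lemma has_expansion_damped_momentr n k : (moment mu (k + n) < +oo)%E ->
  has_expansion n (damped_momentr k).
Proof.
elim: n k => [|n IH] k mkn.
  rewrite addn0 in mkn; exists (fine (moment mu k))%:P; apply/is_little_o0.
  pose proof (cvgB (damped_momentr_cvg k mkn) (cvg_cst (fine (moment mu k)))) as h.
  by rewrite subrr in h; apply: cvg_near_eq h _; near=> x; rewrite /= hornerC.
have mk : (moment mu k < +oo)%E by apply: moment_lty_le mkn; exact: leq_addr.
have [P hP] : has_expansion n (damped_momentr k.+1) by apply: IH; rewrite addSnnS.
exists ((fine (moment mu k))%:P - 'X * P).
refine (is_little_o_near_eq (is_little_oZ (-1) (is_little_o_mulX.2 hP)) _).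
near=> x; have x0 : 0 < x by near: x; exact: nbhs_right_gt.
by rewrite (damped_momentr_split k mk x0) hornerD hornerN hornerC hornerM hornerX; ring.
Unshelve. all: by end_near.
Qed.

Lemma moment_lty_of_has_expansion n k : (moment mu k < +oo)%E ->
  has_expansion n (damped_momentr k.+1) -> (moment mu (k.+1 + n) < +oo)%E.
Proof.
elim: n k => [|n IH] k mk hk.
  by rewrite addn0; apply: moment_succ_lty_of_cvg k mk (has_expansion_cvg hk).
have mk1 := moment_succ_lty_of_cvg k mk (has_expansion_cvg hk).
case: hk => P hP.
have P0 : P.[0] = fine (moment mu k.+1).
  have h1 := is_little_o_horner_cvg hP; have h2 := damped_momentr_cvg k.+1 mk1.
  exact: (cvg_unique _ h1 h2).
rewrite -addSnnS; apply: (IH _ mk1).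
exists (- drop_poly 1 P).
refine (is_little_o_mulX.1 (is_little_o_near_eq (is_little_oZ (-1) hP) _)).
near=> x; have x0 : 0 < x by near: x; exact: nbhs_right_gt.
rewrite /= (damped_momentr_split k.+1 mk1 x0) (horner_drop1 P x) P0 hornerN.
by field.
Unshelve. all: by end_near.
Qed.

Lemma moment_lty_iff_has_expansion k n : (moment mu k < +oo)%E ->
  (moment mu (k.+1 + n) < +oo)%E <-> has_expansion n (damped_momentr k.+1).
Proof.
by move=> mk; split; [exact: has_expansion_damped_momentr | exact: moment_lty_of_has_expansion].
Qed.

Lemma damped_momentr0E x : 0 < x -> damped_momentr 0 x = 1 - x * damped_momentr 1 x.
Proof. by move=> x0; rewrite (damped_momentr_split 0 moment0_lty x0) moment0. Qed.

Lemma damped_momentr0_cvg : damped_momentr 0 x @[x --> (0 : R)^'+] --> (1 : R).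
Proof. by have := damped_momentr_cvg 0 moment0_lty; rewrite moment0. Qed.

Lemma psi_neg x : 0 < x -> psi mu (- x) = damped_momentr 0 x - 1.
Proof.
move=> x0; rewrite damped_momentr0E // addrC addKr /psi /Rintegral.
have d1 := damped_moment_succ_lty 0 moment0_lty x0.
rewrite (eq_integral (fun xi => (- x)%:E * (damped_integrand 1 x xi)%:E)%E); last first.
  move=> xi /[!inE] /D_ge0 xi0; rewrite -EFinM /damped_integrand ger0_norm // expr1.
  by rewrite mulrA !mulNr opprK.
rewrite integralZl //; last first.
  apply/integrableP; split; first exact: measurable_damped_integrand (ltW x0).
  rewrite (eq_integral (fun xi => (damped_integrand 1 x xi)%:E)) //.
  by move=> xi /[!inE] Dxi; rewrite gee0_abs // lee_fin damped_integrand_ge0 // ltW.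
by rewrite -/(damped_moment 1 x) (damped_momentE 1 (ltW x0) d1) -EFinM mulNr.
Qed.

Lemma Kmu_neg x : 0 < x -> Kmu mu (- x) = (damped_momentr 0 x - 1) / damped_momentr 0 x.
Proof. by move=> x0; rewrite /Kmu psi_neg // [1 + _]addrC subrK. Qed.

Lemma Kmu_neg_cvg0 : Kmu mu (- x) @[x --> (0 : R)^'+] --> (0 : R).
Proof.
pose proof (cvgM (cvgB damped_momentr0_cvg (cvg_cst (1 : R)))
  (cvgV (oner_neq0 R) damped_momentr0_cvg)) as h.
rewrite subrr mul0r in h; apply: cvg_near_eq h _.
by near=> x; rewrite /= Kmu_neg //; near: x; exact: nbhs_right_gt.
Unshelve. all: by end_near.
Qed.

Lemma Kmu_damped_momentr_rel : {near (0 : R)^'+, forall x,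
  x^-1 * Kmu mu (- x) + damped_momentr 1 x = x * (x^-1 * Kmu mu (- x)) * damped_momentr 1 x}.
Proof.
pose proof (cvgr_neq0 _ damped_momentr0_cvg (oner_neq0 R)) as G0_neq0.
near=> x; have x0 : 0 < x by near: x; exact: nbhs_right_gt.
have den0 : damped_momentr 0 x != 0 by exact: (near G0_neq0 x).
rewrite Kmu_neg // damped_momentr0E // in den0 *.
by field; rewrite den0 gt_eqF.
Unshelve. all: by end_near.
Qed.

Lemma has_expansion_Kmu_iff n :
  has_expansion n (fun x => x^-1 * Kmu mu (- x)) <-> has_expansion n (damped_momentr 1).
Proof.
split=> h; apply: (has_expansion_fixpoint _ h); last exact: Kmu_damped_momentr_rel.
by near=> x; rewrite addrC mulrAC (near Kmu_damped_momentr_rel x).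
Unshelve. all: by end_near.
Qed.

End DampedMoments.

Theorem proposition4p1 (R : realType) (mu : probability R R)
  (hsupp : mu `]-oo, 0%R[%classic = 0%E)
  (h0 : (mu [set 0%R] < 1)%E) (p : nat) :
  (moment mu p < +oo)%E <->
  exists r : nat -> R,
    (fun x : R =>
       (x^-1 * Kmu mu (- x)
        - \sum_(1 <= k < p.+1) (-1) ^+ k * r k * x ^+ k.-1)
       / x ^ (p%:Z - 1))
      @ 0%R^'+ --> 0%R.
Proof.
case: p => [|n].
  split=> _; first exists (fun _ => 0); last exact: moment0_lty.
  apply: cvg_near_eq (Kmu_neg_cvg0 mu hsupp) _.
  near=> x; have x0 : x != 0 by rewrite gt_eqF //; near: x; exact: nbhs_right_gt.
  by rewrite big_geq // subr0 sub0r exprN1 invrK mulrAC mulVf // mul1r.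
apply: iff_trans (has_expansion_alternating_sum n _).
rewrite has_expansion_Kmu_iff //.
by rewrite -add1n; apply: (moment_lty_iff_has_expansion mu 0 n); exact: moment0_lty.
Unshelve. all: by end_near.
Qed.
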